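(* Let $m\ge2$ and $0<p_1,\dots,p_m,p<\infty$ with $\frac1{p_1}+\dots+\frac1{p_m}=\frac1p$. There is a function $c:[0,\infty)\to[0,\infty)$ depending only on $m,p_1,\dots,p_m$ with $c(\varepsilon)\to0$ as $\varepsilon\to0$ such that the following holds. Let $(X,\mathcal{X},\mu)$ be a measure space, let $f_i\in L^{p_i}(X)$ with $\|f_i\|_{L^{p_i}(X)}>0$ for $i=1,\dots,m$, and suppose that for some $\varepsilon>0$, $$\|f_1\cdots f_m\|_{L^p(X)} \ge (1-\varepsilon)\|f_1\|_{L^{p_1}(X)}\cdots\|f_m\|_{L^{p_m}(X)}.$$ Then there is a measurable set $E\subset X$ with $\int_E|f_i|^{p_i}\,d\mu \le c(\varepsilon)\|f_i\|_{L^{p_i}(X)}^{p_i}$ for all $i$, and there are positive reals $c_1,\dots,c_m$ such that for all $x\in X\setminus E$ and all $i$, $$c_i|f_i(x)|^{p_i} = (1+\delta_i(x))|f_1\cdots f_m(x)|^p \quad\text{with } |\delta_i(x)|\le c(\varepsilon).$$ In particular $c_i|f_i(x)|^{p_i} = (1+\delta_{ij}(x))c_j|f_j(x)|^{p_j}$ with $|\delta_{ij}(x)|\le c(\varepsilon)$ for all $x\in X\setminus E$ and all $i,j$. *)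

From mathcomp Require Import all_boot all_order all_algebra.
From mathcomp Require Import all_classical all_reals all_analysis.
Set Implicit Arguments. Unset Strict Implicit. Unset Printing Implicit Defensive.

From mathcomp Require Import all_boot all_order all_algebra.
From mathcomp Require Import all_classical all_reals all_analysis.
From mathcomp Require Import measurable_realfun ring lra.
Set Implicit Arguments.
Unset Strict Implicit.
Unset Printing Implicit Defensive.
Import Order.TTheory GRing.Theory Num.Theory.
Import numFieldNormedType.Exports.
Local Open Scope classical_set_scope.
Local Open Scope ring_scope.

(* Normalize [g_i := (|f_i| / ||f_i||_(p_i))^(p_i)], of integral 1, and put
   [theta_i := P / p_i], so that [sum theta_i = 1].  The arithmetic mean
   [A := sum theta_i g_i] has integral 1, and the geometric mean
   [G := prod g_i^theta_i] is the normalized [|f_1 ... f_m|^P], whose integral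
   is at least [(1 - eps)^P >= 1 - 2 P eps] by hypothesis.  Weighted AM-GM gives
   [G <= A], and Kober's stability estimate sharpens it to
   [(sqrt g_j - sqrt A)^2 <= lambda (A - G)], with [lambda] depending only on
   the weights.  With [q := eps^(1/4)], Chebyshev's
   inequality bounds the integral of [A] over [E := {G < (1 - q^2) A}] by
   [2 P q^2], while off [E] every [g_j], and [G], is within a factor
   [1 + O(q)] of [A]. *)

(** * Weighted AM-GM and its stability *)

Section WeightedAMGM.
Variable R : realType.
Implicit Types x y t a b u v k : R.

Lemma weighted_amgm2 x y t : 0 <= x -> 0 <= y -> 0 <= t <= 1 ->
  x `^ t * y `^ (1 - t) <= t * x + (1 - t) * y.
Proof.
move=> x0 y0 /andP[t0 t1].
have [->|tn0] := eqVneq t 0; first by rewrite powRr0 !subr0 powRr1 //; lra.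
have [->|tn1] := eqVneq t 1; first by rewrite powRr1 // subrr powRr0; lra.
have tp : 0 < t by rewrite lt_neqAle eq_sym tn0.
have ut : 0 < 1 - t by rewrite subr_gt0 lt_neqAle tn1.
have := @conjugate_powR _ _ _ t^-1 (1 - t)^-1 (powR_ge0 x t)
  (powR_ge0 y (1 - t)) (_ : 0 < t^-1) (_ : 0 < (1 - t)^-1).
rewrite !invrK -!powRrM !mulfV ?gt_eqF // !powRr1 // [x * t]mulrC [y * _]mulrC.
by apply; rewrite ?invr_gt0 // subrKC.
Qed.

Lemma weighted_amgm2_gt0 x y a b : 0 <= x -> 0 <= y -> 0 < a -> 0 < b ->
  x `^ a * y `^ b <= ((a * x + b * y) / (a + b)) `^ (a + b).
Proof.
move=> x0 y0 a0 b0.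
have ab0 : 0 < a + b by rewrite addr_gt0.
set t := a / (a + b).
have e1 : 1 - t = b / (a + b) by rewrite /t; field; rewrite gt_eqF.
have t01 : 0 <= t <= 1.
  apply/andP; split; first by rewrite divr_ge0 ?ltW.
  by rewrite ler_pdivrMr // mul1r lerDl ltW.
have amgm := weighted_amgm2 x0 y0 t01.
have -> : (a * x + b * y) / (a + b) = t * x + (1 - t) * y.
  by rewrite e1 /t; field; rewrite gt_eqF.
apply: le_trans (ge0_ler_powR (ltW ab0) _ _ amgm); last 2 first.
- by rewrite nnegrE mulr_ge0 ?powR_ge0.
- by rewrite nnegrE addr_ge0 // mulr_ge0 // ?e1 ?divr_ge0 ?ltW //; case/andP: t01.
by rewrite powRM ?powR_ge0 // -!powRrM e1 /t !divfK ?gt_eqF.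
Qed.

Lemma weighted_amgm (I : Type) (s : seq I) (w g : I -> R) :
  (forall i, 0 < w i) -> (forall i, 0 <= g i) ->
  \prod_(i <- s) g i `^ w i <=
  ((\sum_(i <- s) w i * g i) / \sum_(i <- s) w i) `^ (\sum_(i <- s) w i).
Proof.
move=> w0 g0; elim: s => [|i s IH]; first by rewrite !big_nil powRr0.
case: s IH => [|k s] IH.
  by rewrite !big_cons !big_nil !addr0 mulr1 [w i * g i]mulrC mulfK ?gt_eqF.
have W0 : 0 < \sum_(j <- k :: s) w j.
  by rewrite big_cons ltr_pwDl //; apply: sumr_ge0 => j _; exact: ltW.
move: (k :: s) W0 IH => {k}s W0 IH; rewrite !big_cons.
have S0 : 0 <= (\sum_(j <- s) w j * g j) / \sum_(j <- s) w j.
  apply: divr_ge0; last exact: ltW.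
  by apply: sumr_ge0 => j _; exact: mulr_ge0 (ltW (w0 j)) (g0 j).
apply: le_trans (ler_wpM2l (powR_ge0 _ _) IH) _.
have := weighted_amgm2_gt0 (g0 i) S0 (w0 i) W0.
by rewrite (mulrC (\sum_(j <- s) w j) (_ / _)) divfK ?gt_eqF.
Qed.

Lemma kober_small_weight a b t : 0 <= a -> 0 <= b -> 0 < t -> t <= 2^-1 ->
  t * (Num.sqrt a - Num.sqrt b) ^+ 2 <=
  t * a + (1 - t) * b - a `^ t * b `^ (1 - t).
Proof.
move=> a0 b0 t0 th.
set u := Num.sqrt a; set v := Num.sqrt b.
have au : a = u ^+ 2 by rewrite sqr_sqrtr.
have bv : b = v ^+ 2 by rewrite sqr_sqrtr.
have s01 : 0 <= 2 * t <= 1 by apply/andP; split; lra.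
have := weighted_amgm2 (mulr_ge0 (sqrtr_ge0 a) (sqrtr_ge0 b)) b0 s01.
have -> : (u * v) `^ (2 * t) = a `^ t * b `^ t.
  by rewrite powRM ?sqrtr_ge0 // !powRrM !powR_mulrn ?sqrtr_ge0 // -au -bv.
rewrite -mulrA -powRD; last by apply/implyP => /eqP; lra.
rewrite (_ : t + (1 - 2 * t) = 1 - t); last by ring.
move=> amgm; have -> : t * (u - v) ^+ 2 =
    t * a + (1 - t) * b - (2 * t * (u * v) + (1 - 2 * t) * b).
  by rewrite au bv; ring.
by rewrite lerD2l lerN2.
Qed.

Lemma kober a b t : 0 <= a -> 0 <= b -> 0 < t < 1 ->
  (Num.sqrt a - Num.sqrt b) ^+ 2 <=
  (t^-1 + (1 - t)^-1) * (t * a + (1 - t) * b - a `^ t * b `^ (1 - t)).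
Proof.
move=> a0 b0 /andP[t0 t1].
have s0 : 0 < 1 - t by rewrite subr_gt0.
set D := t * a + (1 - t) * b - _; set X := (_ - _) ^+ 2.
suff [s [s0' sD] ss] : exists2 s, 0 < s /\ s * X <= D & s^-1 <= t^-1 + (1 - t)^-1.
  have D0 : 0 <= D by apply: le_trans sD; rewrite mulr_ge0 ?sqr_ge0 ?ltW.
  apply: (@le_trans _ _ (s^-1 * D)); last by rewrite ler_wpM2r.
  by rewrite ler_pdivlMl.
have [th|th] := lerP t 2^-1.
  by exists t; [split; last exact: kober_small_weight | rewrite lerDl invr_ge0 ltW].
exists (1 - t); last by rewrite lerDr invr_ge0 ltW.
split => //; have := kober_small_weight b0 a0 s0 (_ : 1 - t <= 2^-1).
rewrite opprB (_ : 1 + (t - 1) = t); last by ring.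
rewrite /X -sqrrN opprB (addrC ((1 - t) * b)) (mulrC (b `^ _)); apply; lra.
Qed.

Lemma sqrt_dist_convex_comb_le g b t : 0 <= g -> 0 <= b -> 0 <= t <= 1 ->
  (Num.sqrt g - Num.sqrt (t * g + (1 - t) * b)) ^+ 2 <=
  (Num.sqrt g - Num.sqrt b) ^+ 2.
Proof.
move=> g0 b0 /andP[t0 t1]; set a := t * g + (1 - t) * b.
have [gb|bg] := lerP g b.
  have /ler_wsqrtr ga : g <= a by rewrite /a; nra.
  have /ler_wsqrtr ab : a <= b by rewrite /a; nra.
  have := sqrtr_ge0 g; nra.
have /ler_wsqrtr ba : b <= a by rewrite /a; nra.
have /ler_wsqrtr ag : a <= g by rewrite /a; nra.
have := sqrtr_ge0 b; nra.
Qed.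

Lemma weighted_amgm_sum1 n (w g : 'I_n -> R) :
  (forall i, 0 < w i) -> \sum_i w i = 1 -> (forall i, 0 <= g i) ->
  \prod_i g i `^ w i <= \sum_i w i * g i.
Proof.
move=> w0 w1 g0; have := weighted_amgm (index_enum 'I_n) w0 g0.
have A0 : 0 <= \sum_i w i * g i.
  by apply: sumr_ge0 => i _; exact: mulr_ge0 (ltW (w0 i)) (g0 i).
by rewrite w1 divr1 powRr1.
Qed.

(* Grouping all weights but the [j]-th reduces to the two-point case, where
   the mean of the other values lies between [g j] and the mean. *)
Lemma amgm_stability n (w g : 'I_n -> R) j :
  (forall i, 0 < w i < 1) -> \sum_i w i = 1 -> (forall i, 0 <= g i) ->
  (Num.sqrt (g j) - Num.sqrt (\sum_i w i * g i)) ^+ 2 <=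
  ((w j)^-1 + (1 - w j)^-1) * (\sum_i w i * g i - \prod_i g i `^ w i).
Proof.
move=> w01 w1 g0; have w0 i : 0 < w i by case/andP: (w01 i).
have /andP[t0 t1] := w01 j; set t := w j.
have ut : 0 < 1 - t by rewrite subr_gt0.
set S := \sum_(i | i != j) w i * g i.
have wS : \sum_(i | i != j) w i = 1 - t.
  by move: w1; rewrite (bigD1 j) //= => <-; rewrite addrC addrK.
set b := S / (1 - t).
have b0 : 0 <= b.
  apply: divr_ge0; last exact: ltW.
  by apply: sumr_ge0 => i _; exact: mulr_ge0 (ltW (w0 i)) (g0 i).
have AE : \sum_i w i * g i = t * g j + (1 - t) * b.
  by rewrite (bigD1 j) //= /b [(1 - t) * _]mulrC divfK ?gt_eqF.
have GE : \prod_i g i `^ w i <= g j `^ t * b `^ (1 - t).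
  rewrite (bigD1 j) //= ler_wpM2l ?powR_ge0 //.
  by have := weighted_amgm [seq i <- index_enum 'I_n | i != j] w0 g0; rewrite !big_filter wS.
rewrite AE; apply: le_trans (sqrt_dist_convex_comb_le (g0 j) b0 _) _.
  by rewrite !ltW.
apply: le_trans (kober (g0 j) b0 _) _; first exact: w01.
apply: ler_wpM2l; first by rewrite addr_ge0 // invr_ge0 ltW.
by rewrite lerD2l lerN2.
Qed.

Lemma sqrt_dist_le_sandwich g a x : 0 <= g -> 0 <= a -> 0 <= x <= 1 ->
  (Num.sqrt g - Num.sqrt a) ^+ 2 <= x ^+ 2 * a ->
  (1 - x) ^+ 2 * a <= g <= (1 + x) ^+ 2 * a.
Proof.
move=> g0 a0 /andP[x0 x1] h.
have xv : 0 <= x * Num.sqrt a by rewrite mulr_ge0 ?sqrtr_ge0.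
have /ler_wsqrtr : (Num.sqrt g - Num.sqrt a) ^+ 2 <= (x * Num.sqrt a) ^+ 2.
  by rewrite exprMn sqr_sqrtr.
rewrite !sqrtr_sqr (ger0_norm xv) ler_norml => /andP[h1 h2].
move: (sqrtr_ge0 g) (sqrtr_ge0 a) (sqr_sqrtr g0) (sqr_sqrtr a0) h1 h2 xv.
set u := Num.sqrt g; set v := Num.sqrt a => u0 v0 <- <- h1 h2 xv.
have l1 : 0 <= u - (1 - x) * v by lra.
have l2 : 0 <= u + (1 - x) * v by nra.
have l3 : 0 <= (1 + x) * v - u by lra.
have l4 : 0 <= (1 + x) * v + u by nra.
by apply/andP; split; nra.
Qed.

Lemma rel_err_factor a b k : 0 <= b -> 0 <= k -> `|a - b| <= k * b ->
  exists delta, `|delta| <= k /\ a = (1 + delta) * b.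
Proof.
move=> b0 k0; have [->|bn0] := eqVneq b 0 => hab.
  rewrite mulr0 subr0 normr_le0 in hab.
  by exists 0; rewrite normr0 (eqP hab) mulr0.
have bp : 0 < b by rewrite lt_neqAle eq_sym bn0.
exists ((a - b) / b); split; last by rewrite mulrDl mul1r divfK ?gt_eqF // subrKC.
by rewrite normrM normfV (gtr0_norm bp) ler_pdivrMr.
Qed.

Lemma sandwich_dist_mean_le g a G x : 0 <= a -> 0 <= x <= 2^-1 ->
  (1 - x) ^+ 2 * a <= g <= (1 + x) ^+ 2 * a -> (1 - x ^+ 2) * a <= G <= a ->
  `|g - G| <= 4 * x * G.
Proof.
move=> a0 /andP[x0 xh] /andP[h1 h2] /andP[h3 h4].
have k1 : 0 <= (1 + 4 * x) * (G - (1 - x ^+ 2) * a).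
  by rewrite mulr_ge0 ?subr_ge0 //; lra.
have k2 : 0 <= 2 * x * a * (1 + x) * (1 - 2 * x) by rewrite !mulr_ge0 //; lra.
have k3 : 0 <= x * (G - (1 - x ^+ 2) * a) by rewrite mulr_ge0 ?subr_ge0.
have k4 : 0 <= x * a * (2 + x - 4 * x ^+ 2) by rewrite !mulr_ge0 //; nra.
by rewrite ler_norml; apply/andP; split; lra.
Qed.

Lemma sandwich_dist_le g g' a x : 0 <= a -> 0 <= x <= 2^-1 ->
  (1 - x) ^+ 2 * a <= g <= (1 + x) ^+ 2 * a ->
  (1 - x) ^+ 2 * a <= g' <= (1 + x) ^+ 2 * a ->
  `|g - g'| <= 16 * x * g'.
Proof.
move=> a0 /andP[x0 xh] /andP[h1 h2] /andP[h3 h4].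
have k1 : 0 <= x * (g' - (1 - x) ^+ 2 * a) by rewrite mulr_ge0 ?subr_ge0.
have k2 : 0 <= x * a * ((1 - x) ^+ 2 - 4^-1) by rewrite !mulr_ge0 // subr_ge0; nra.
by rewrite ler_norml; apply/andP; split; lra.
Qed.

Lemma one_sub_powR_ge (e P : R) : 0 < e <= 2^-1 -> 0 < P -> 1 - 2 * P * e <= (1 - e) `^ P.
Proof.
move=> /andP[e0 eh] P0; have a0 : 0 < 1 - e by lra.
rewrite /powR gt_eqF //; apply: le_trans (expR_ge1Dx _); rewrite lerD2l.
have : ln ((1 - e)^-1) <= 2 * e.
  have -> : (1 - e)^-1 = 1 + e / (1 - e) by field; rewrite gt_eqF.
  apply: le_trans (le_ln1Dx _) _; last by rewrite ler_pdivrMr //; nra.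
  have : 0 <= e / (1 - e) by rewrite divr_ge0 ?ltW.
  lra.
rewrite lnV ?posrE //; nra.
Qed.

Lemma powR_div a b t : 0 <= a -> 0 < b -> (a / b) `^ t = (b `^ t)^-1 * a `^ t.
Proof.
move=> a0 b0; rewrite powRM // ?invr_ge0 ?ltW // mulrC; congr (_ * _).
by rewrite -powR_inv1 ?ltW // -powRrM mulN1r powRN.
Qed.

Lemma powR_prod (I : Type) (s : seq I) (F : I -> R) t :
  (forall i, 0 <= F i) -> (\prod_(i <- s) F i) `^ t = \prod_(i <- s) F i `^ t.
Proof.
move=> F0; elim: s => [|i s IH]; first by rewrite !big_nil powR1.
by rewrite !big_cons powRM ?IH // prodr_ge0.
Qed.

End WeightedAMGM.

Section Integrals.
Context (R : realType) (d : measure_display) (T : measurableType d)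
  (mu : {measure set T -> \bar R}).
Local Open Scope ereal_scope.

Lemma ge0_integralZl_EFinM (D : set T) (h : T -> R) (k : R) : measurable D ->
  measurable_fun setT h -> (forall x, (0 <= h x)%R) -> (0 <= k)%R ->
  \int[mu]_(x in D) (k * h x)%:E = k%:E * \int[mu]_(x in D) (h x)%:E.
Proof.
move=> mD mh h0 k0; under eq_integral do rewrite EFinM.
apply: ge0_integralZl_EFin => //; first by move=> x _; rewrite lee_fin.
by apply/measurable_EFinP; exact: measurable_funS mh.
Qed.

Lemma Lnorm_fineE (f : T -> R) (p : R) : (0 < p)%R ->
  'N[mu]_(p%:E)[EFin \o f] < +oo -> 0 < 'N[mu]_(p%:E)[EFin \o f] ->
  [/\ (0 < fine 'N[mu]_(p%:E)[EFin \o f])%R,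
      'N[mu]_(p%:E)[EFin \o f] = (fine 'N[mu]_(p%:E)[EFin \o f])%:E &
      \int[mu]_x (`|f x| `^ p)%:E = ((fine 'N[mu]_(p%:E)[EFin \o f]) `^ p)%:E].
Proof.
move=> p0 Nfin Npos.
have fN : 'N[mu]_(p%:E)[EFin \o f] \is a fin_num by rewrite gt0_fin_numE.
split; [by rewrite fine_gt0 // Npos Nfin | by rewrite fineK |].
by rewrite -poweR_EFin fineK // poweR_Lnorm ?gt_eqF.
Qed.

End Integrals.

(** * Near-equality in Holder's inequality *)

Section HolderNearEquality.
Variables (R : realType) (m : nat) (p : 'I_m -> R) (P : R).
Hypotheses (m_ge2 : (2 <= m)%N) (p_gt0 : forall i, 0 < p i) (P_gt0 : 0 < P)
  (sum_inv_p : \sum_(i < m) (p i)^-1 = P^-1).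

Let theta i := P / p i.

Let theta_gt0 i : 0 < theta i. Proof. by rewrite divr_gt0. Qed.

Let theta_sum : \sum_i theta i = 1.
Proof. by rewrite -mulr_sumr sum_inv_p divff ?gt_eqF. Qed.

Let theta_lt1 i : theta i < 1.
Proof.
have [k ki] : exists k : 'I_m, k != i.
  have m0 : (0 < m)%N by apply: leq_trans m_ge2.
  have [i0|i0] := eqVneq (val i) 0%N.
    by exists (Ordinal m_ge2); apply/eqP => /(congr1 val) /=; rewrite i0.
  by exists (Ordinal m0); apply/eqP => /(congr1 val) /= /esym/eqP; apply/negP.
rewrite -theta_sum (bigD1 i) //= ltrDl (bigD1 k) //= ltr_pwDl //.
by apply: sumr_ge0 => j _; exact: ltW.
Qed.

Let lambda := \sum_j ((theta j)^-1 + (1 - theta j)^-1).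

Let lambda_term_ge0 j : 0 <= (theta j)^-1 + (1 - theta j)^-1.
Proof. by rewrite addr_ge0 // invr_ge0 ltW // subr_gt0. Qed.

Let lambda_ge_term j : (theta j)^-1 + (1 - theta j)^-1 <= lambda.
Proof. by rewrite /lambda (bigD1 j) //= lerDl sumr_ge0. Qed.

Let lambda_ge1 : 1 <= lambda.
Proof.
have j : 'I_m by exists 0%N; apply: leq_trans m_ge2.
apply: le_trans (lambda_ge_term j); apply: (@le_trans _ _ (theta j)^-1).
  by rewrite invf_ge1 // ltW.
by rewrite lerDl invr_ge0 subr_ge0 ltW.
Qed.

Let lambda_ge0 : 0 <= lambda. Proof. exact: le_trans lambda_ge1. Qed.

Let K := 16 * lambda + 2 * \sum_i p i.

Let K_ge : 16 * lambda <= K.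
Proof. by rewrite lerDl mulr_ge0 // sumr_ge0 // => i _; exact: ltW. Qed.

Let K_ge_p i : 2 * p i <= K.
Proof.
apply: (@le_trans _ _ (2 * \sum_j p j)).
  rewrite ler_wpM2l // (bigD1 i) //= lerDl.
  by apply: sumr_ge0 => j _; exact: ltW.
by rewrite lerDr mulr_ge0.
Qed.

(* [16 lambda] controls the pointwise errors off the exceptional set, and
   [2 sum p_i] its mass. *)
Definition holder_stability_bound e := K * e `^ 4^-1.

Lemma holder_stability_bound_ge0 e : 0 <= holder_stability_bound e.
Proof. by rewrite mulr_ge0 ?powR_ge0 // (le_trans _ K_ge) ?mulr_ge0. Qed.

Lemma holder_stability_bound_cvg0 : holder_stability_bound @ 0^'+ --> 0.
Proof.
rewrite -[X in _ --> X](mulr0 K); apply: cvgMl_tmp.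
by apply: powR_cvg0; rewrite invr_gt0.
Qed.

Let lambda_le_bound e : 16 * (lambda * e `^ 4^-1) <= holder_stability_bound e.
Proof. by rewrite mulrA ler_wpM2r ?powR_ge0. Qed.

Variables (d : measure_display) (T : measurableType d)
  (mu : {measure set T -> \bar R}) (f : 'I_m -> T -> R).
Hypotheses (f_mfun : forall i, measurable_fun setT (f i))
  (Lnorm_f_fin : forall i, ('N[mu]_((p i)%:E)[EFin \o f i] < +oo)%E)
  (Lnorm_f_gt0 : forall i, (0 < 'N[mu]_((p i)%:E)[EFin \o f i])%E).

Let almost_sharp eps := ((1 - eps)%:E * \prod_i 'N[mu]_((p i)%:E)[EFin \o f i] <=
  'N[mu]_(P%:E)[(fun x => (\prod_i f i x)%:E)])%E.

Definition holder_near_extremal (c : R) :=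
  exists E : set T, measurable E /\
    (forall i, (\int[mu]_(x in E) (`|f i x| `^ p i)%:E <=
      c%:E * ('N[mu]_((p i)%:E)[EFin \o f i]) `^ (p i))%E) /\
    exists cs : 'I_m -> R, (forall i, 0 < cs i) /\
      (forall x, ~ E x -> forall i, exists delta : R,
        `|delta| <= c /\ cs i * `|f i x| `^ p i = (1 + delta) * `|\prod_j f j x| `^ P) /\
      (forall x, ~ E x -> forall i j, exists delta : R,
        `|delta| <= c /\ cs i * `|f i x| `^ p i = (1 + delta) * (cs j * `|f j x| `^ p j)).

Let r i := fine ('N[mu]_((p i)%:E)[EFin \o f i])%E.

Let r_gt0 i : 0 < r i.
Proof. by have [] := Lnorm_fineE (p_gt0 i) (Lnorm_f_fin i) (Lnorm_f_gt0 i). Qed.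

Let LnormE i : ('N[mu]_((p i)%:E)[EFin \o f i] = (r i)%:E)%E.
Proof. by have [] := Lnorm_fineE (p_gt0 i) (Lnorm_f_fin i) (Lnorm_f_gt0 i). Qed.

Let integral_powR_normE i :
  (\int[mu]_x (`|f i x| `^ p i)%:E = (r i `^ p i)%:E)%E.
Proof. by have [] := Lnorm_fineE (p_gt0 i) (Lnorm_f_fin i) (Lnorm_f_gt0 i). Qed.

Let rho := \prod_i r i.

Let rho_gt0 : 0 < rho. Proof. by apply: prodr_gt0 => i _. Qed.

Let g i x := (`|f i x| / r i) `^ p i.
Let A x := \sum_i theta i * g i x.
Let G x := (`|\prod_i f i x| / rho) `^ P.

Let g_ge0 i x : 0 <= g i x. Proof. exact: powR_ge0. Qed.

Let G_ge0 x : 0 <= G x. Proof. exact: powR_ge0. Qed.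

Let A_ge0 x : 0 <= A x.
Proof. by apply: sumr_ge0 => i _; rewrite mulr_ge0 // ltW. Qed.

Let gE i x : g i x = (r i `^ p i)^-1 * `|f i x| `^ p i.
Proof. by rewrite /g powR_div. Qed.

Let GE x : G x = (rho `^ P)^-1 * `|\prod_i f i x| `^ P.
Proof. by rewrite /G powR_div. Qed.

Let G_prodE x : G x = \prod_i g i x `^ theta i.
Proof.
rewrite /G normr_prod /rho -prodf_div powR_prod; last first.
  by move=> i; rewrite divr_ge0 // ltW.
apply: eq_bigr => i _; rewrite /g -powRrM /theta; congr (_ `^ _).
by field; rewrite gt_eqF.
Qed.

Let G_le_A x : G x <= A x.
Proof. by rewrite G_prodE; apply: weighted_amgm_sum1. Qed.

Let sqrt_dist_le x j :
  (Num.sqrt (g j x) - Num.sqrt (A x)) ^+ 2 <= lambda * (A x - G x).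
Proof.
rewrite G_prodE; apply: le_trans (amgm_stability _ _ _ _) _ => //.
- by move=> i; rewrite theta_gt0 theta_lt1.
- by rewrite ler_wpM2r // subr_ge0 -G_prodE.
Qed.

Let norm_mfun i : measurable_fun setT (fun x => `|f i x|).
Proof. exact: measurableT_comp (@measurable_realfun.normr_measurable _ _) _. Qed.

Let g_mfun i : measurable_fun setT (g i).
Proof. by apply: measurableT_comp (measurable_powR _) _; apply: measurable_funM. Qed.

Let A_mfun : measurable_fun setT A.
Proof. by apply: measurable_sum => i; apply: measurable_funM. Qed.

Let G_mfun : measurable_fun setT G.
Proof.
apply: measurableT_comp (measurable_powR _) _; apply: measurable_funM => //.
apply: measurableT_comp (@measurable_realfun.normr_measurable _ _) _.
by apply: measurable_prod => i _.
Qed.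


Let powR_norm_mfun i : measurable_fun setT (fun x => `|f i x| `^ p i).
Proof. exact: measurableT_comp (measurable_powR _) _. Qed.

Let powR_norm_le_A i x : `|f i x| `^ p i <= r i `^ p i * (p i / P) * A x.
Proof.
have rp_gt0 : 0 < r i `^ p i by rewrite powR_gt0.
have -> : `|f i x| `^ p i = r i `^ p i * (p i / P) * (theta i * g i x).
  by rewrite gE /theta; field; rewrite !gt_eqF.
apply: ler_wpM2l; first by rewrite mulr_ge0 ?divr_ge0 // ltW.
rewrite /A (bigD1 i) //= lerDl.
by apply: sumr_ge0 => k _; rewrite mulr_ge0 // ltW.
Qed.

Local Open Scope ereal_scope.

Let integral_g i : \int[mu]_x (g i x)%:E = 1.
Proof.
have k0 : (0 <= (r i `^ p i)^-1)%R by rewrite invr_ge0 powR_ge0.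
under eq_integral do rewrite gE.
rewrite (ge0_integralZl_EFinM _ measurableT (powR_norm_mfun i) (fun x => powR_ge0 _ _) k0).
by rewrite integral_powR_normE -EFinM mulVf // gt_eqF // powR_gt0.
Qed.

Let integral_A : \int[mu]_x (A x)%:E = 1.
Proof.
under eq_integral do rewrite /A -sumEFin.
rewrite ge0_integral_sum //; last 2 first.
- by move=> k; apply/measurable_EFinP; apply: measurable_funM.
- by move=> k x _; rewrite lee_fin mulr_ge0 // ltW.
under eq_bigr => k _.
  rewrite (ge0_integralZl_EFinM _ measurableT (g_mfun k) (g_ge0 k) (ltW (theta_gt0 k))).
  by rewrite integral_g mule1 over.
by rewrite sumEFin theta_sum.
Qed.

Let powR_norm_prod_mfun : measurable_fun setT (fun x => `|\prod_i f i x| `^ P)%R.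
Proof.
apply: measurableT_comp (measurable_powR _) _.
apply: measurableT_comp (@measurable_realfun.normr_measurable _ _) _.
by apply: measurable_prod => i _.
Qed.

Let integral_G_ge eps : (0 < eps <= 2^-1)%R ->
  almost_sharp eps ->
  (1 - 2 * P * eps)%:E <= \int[mu]_x (G x)%:E.
Proof.
move=> /andP[eps_gt0 eps_le] hyp.
have eps1 : (0 <= 1 - eps)%R by lra.
have prodN : \prod_i 'N[mu]_((p i)%:E)[EFin \o f i] = rho%:E.
  by rewrite -prodEFin; apply: eq_bigr => i _; rewrite LnormE.
move: hyp; rewrite /almost_sharp prodN -EFinM => hyp.
have lhs_ge0 : ((1 - eps) * rho)%:E \in `[0, +oo].
  by rewrite in_itv /= leey andbT lee_fin mulr_ge0 // ltW.
have rhs_ge0 : 'N[mu]_(P%:E)[(fun x => (\prod_i f i x)%:E)] \in `[0, +oo].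
  by rewrite in_itv /= Lnorm_ge0 leey.
have := gt0_ler_poweR (ltW P_gt0) lhs_ge0 rhs_ge0 hyp.
rewrite poweR_EFin poweR_Lnorm ?gt_eqF // => hyp_int.
have k0 : (0 <= (rho `^ P)^-1)%R by rewrite invr_ge0 powR_ge0.
under eq_integral do rewrite GE.
rewrite (ge0_integralZl_EFinM _ measurableT powR_norm_prod_mfun (fun x => powR_ge0 _ _) k0).
apply: le_trans (lee_wpmul2l _ hyp_int); last by rewrite lee_fin.
rewrite -EFinM lee_fin (powRM _ eps1 (ltW rho_gt0)) mulrCA mulVf ?gt_eqF ?powR_gt0 // mulr1.
by apply: one_sub_powR_ge; rewrite ?eps_gt0.
Qed.

Let bad k := [set x | (G x < (1 - k) * A x)%R].

Let bad_measurable k : measurable (bad k).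
Proof.
have : measurable_fun setT (fun x => (G x < (1 - k) * A x)%R).
  by apply: measurable_fun_ltr => //; exact: measurable_funM.
move=> /(_ measurableT [set true] I).
by rewrite setTI; congr measurable; apply/seteqP; split => x //= ->.
Qed.

Let kA_bad_mfun k : measurable_fun setT ((fun x => (k * A x)%:E) \_ (bad k)).
Proof.
apply: (measurable_restrictT _ (bad_measurable k)).1; apply/measurable_EFinP.
by apply: measurable_funM => //; exact: measurable_funS A_mfun.
Qed.

Let integral_bad_le k : (0 <= k)%R ->
  \int[mu]_x (G x)%:E + k%:E * \int[mu]_(x in bad k) (A x)%:E <= 1.
Proof.
move=> k_ge0.
rewrite -(ge0_integralZl_EFinM _ (bad_measurable k) A_mfun A_ge0 k_ge0).
have kA_bad_ge0 x : setT x -> 0 <= ((fun x => (k * A x)%:E) \_ (bad k)) x.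
  by move=> _; rewrite /patch; case: ifPn => _ //; rewrite lee_fin mulr_ge0.
have G_EFin_mfun : measurable_fun setT (fun x => (G x)%:E).
  exact/measurable_EFinP.
have G_EFin_ge0 x : setT x -> 0 <= (G x)%:E by move=> _; rewrite lee_fin.
rewrite [X in _ + X]integral_mkcond.
rewrite -(@ge0_integralD _ _ _ mu setT measurableT _ _
  G_EFin_ge0 G_EFin_mfun kA_bad_ge0 (kA_bad_mfun k)).
rewrite -integral_A; apply: ge0_le_integral => //.
- by move=> x _; rewrite adde_ge0 ?lee_fin // kA_bad_ge0.
- exact: emeasurable_funD.
- exact/measurable_EFinP.
- move=> x _; rewrite /patch; case: ifPn => [|_]; last by rewrite adde0 lee_fin.
  by rewrite inE /bad /= => Gx; rewrite -EFinD lee_fin; lra.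
Qed.

Let integral_bad_A_le eps k : (0 < eps <= 2^-1)%R -> (0 < k)%R ->
  almost_sharp eps ->
  \int[mu]_(x in bad k) (A x)%:E <= (k^-1 * (2 * P * eps))%:E.
Proof.
move=> eps01 k_gt0 hyp; rewrite EFinM lee_pdivlMl //.
rewrite -(@leeD2lE _ (1 - 2 * P * eps)%:E) // -EFinD subrK.
exact: le_trans (leeD2r _ (integral_G_ge eps01 hyp)) (integral_bad_le (ltW k_gt0)).
Qed.

Let integral_bad_powR_le eps k i : (0 < eps <= 2^-1)%R -> (0 < k)%R ->
  almost_sharp eps ->
  \int[mu]_(x in bad k) (`|f i x| `^ p i)%:E <=
    (r i `^ p i * (p i / P) * (k^-1 * (2 * P * eps)))%:E.
Proof.
move=> eps01 k_gt0 hyp.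
have c_ge0 : (0 <= r i `^ p i * (p i / P))%R.
  by rewrite mulr_ge0 ?powR_ge0 ?divr_ge0 // ltW.
apply: (@le_trans _ _ (\int[mu]_(x in bad k) (r i `^ p i * (p i / P) * A x)%:E)).
  apply: ge0_le_integral => //.
  - by apply/measurable_EFinP; exact: measurable_funS (powR_norm_mfun i).
  - apply/measurable_EFinP; apply: measurable_funM => //.
    exact: measurable_funS A_mfun.
  - by move=> x _; rewrite lee_fin powR_norm_le_A.
rewrite (ge0_integralZl_EFinM _ (bad_measurable k) A_mfun A_ge0 c_ge0).
rewrite [X in _ <= X]EFinM.
by apply: lee_wpmul2l; rewrite ?lee_fin // integral_bad_A_le.
Qed.

Local Close Scope ereal_scope.

Let sandwich_off_bad k y x j : 0 <= y <= 1 -> lambda * k <= y ^+ 2 -> ~ bad k x ->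
  (1 - y) ^+ 2 * A x <= g j x <= (1 + y) ^+ 2 * A x.
Proof.
move=> y01 lambda_k notbad; apply: sqrt_dist_le_sandwich => //.
have AG : A x - G x <= k * A x by move/negP: notbad; rewrite -leNgt; lra.
apply: le_trans (sqrt_dist_le x j) _.
apply: (@le_trans _ _ (lambda * (k * A x))).
  by rewrite ler_wpM2l.
by rewrite mulrA ler_wpM2r.
Qed.

Section SmallDeficit.
Variable eps : R.
Hypothesis eps_gt0 : 0 < eps.
Let q := eps `^ 4^-1.
Hypothesis q_small : lambda * q <= 2^-1.

Let q_gt0 : 0 < q. Proof. by rewrite powR_gt0. Qed.

Let q_le : q <= 2^-1.
Proof. by apply: le_trans q_small; rewrite ler_peMl // ltW. Qed.

Let eps_q : eps = q ^+ 4.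
Proof. by rewrite /q -powR_mulrn ?powR_ge0 // -powRrM mulVf ?powRr1 ?ltW. Qed.

Let eps_le : 0 < eps <= 2^-1.
Proof.
rewrite eps_gt0 eps_q; apply: le_trans q_le.
by rewrite -[leRHS]expr1 ler_wiXn2l // ?ltW //; have := q_le; lra.
Qed.

Let lambda_q : 0 <= lambda * q <= 2^-1.
Proof. by rewrite q_small mulr_ge0 // ltW. Qed.

Let lambda_sq : lambda * q ^+ 2 <= (lambda * q) ^+ 2.
Proof.
rewrite exprMn; apply: ler_wpM2r; first by rewrite exprn_ge0 // ltW.
by rewrite expr2 ler_peMl.
Qed.

Let integral_bad_powR_small i : almost_sharp eps ->
  (\int[mu]_(x in bad (q ^+ 2)) (`|f i x| `^ p i)%:E <=
    (holder_stability_bound eps)%:E * ('N[mu]_((p i)%:E)[EFin \o f i]) `^ (p i))%E.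
Proof.
move=> hyp; rewrite LnormE poweR_EFin -EFinM.
have sq_gt0 : 0 < q ^+ 2 by rewrite exprn_gt0.
apply: le_trans (integral_bad_powR_le i eps_le sq_gt0 hyp) _; rewrite lee_fin.
have -> : r i `^ p i * (p i / P) * ((q ^+ 2)^-1 * (2 * P * eps)) =
    2 * p i * q ^+ 2 * r i `^ p i.
  by rewrite eps_q; field; rewrite !gt_eqF.
rewrite ler_wpM2r ?powR_ge0 //.
apply: (@le_trans _ _ (2 * p i * q)); last exact: ler_wpM2r (ltW q_gt0) _ _ (K_ge_p i).
apply: ler_wpM2l; first by rewrite mulr_ge0 // ltW.
by rewrite expr2; apply: ler_piMl; [exact: ltW | have := q_le; lra].
Qed.

Let sandwich_small x j : ~ bad (q ^+ 2) x ->
  (1 - lambda * q) ^+ 2 * A x <= g j x <= (1 + lambda * q) ^+ 2 * A x.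
Proof.
move=> notbad; apply: sandwich_off_bad notbad => //.
by case/andP: lambda_q => y0 y1; apply/andP; split => //; lra.
Qed.

Let G_near_A x : ~ bad (q ^+ 2) x -> (1 - (lambda * q) ^+ 2) * A x <= G x <= A x.
Proof.
move=> notbad; rewrite G_le_A andbT; apply: (@le_trans _ _ ((1 - q ^+ 2) * A x)).
  apply: ler_wpM2r => //; rewrite lerD2l lerN2; apply: le_trans lambda_sq.
  by rewrite ler_peMl // exprn_ge0 // ltW.
by move/negP: notbad; rewrite -leNgt.
Qed.

Let rel_err_G_small x i : ~ bad (q ^+ 2) x ->
  exists delta, `|delta| <= holder_stability_bound eps /\ g i x = (1 + delta) * G x.
Proof.
move=> notbad; apply: rel_err_factor => //; first exact: holder_stability_bound_ge0.
apply: le_trans (sandwich_dist_mean_le (A_ge0 x) lambda_q (sandwich_small i notbad)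
  (G_near_A notbad)) _.
apply: ler_wpM2r => //; case/andP: lambda_q => lq0 _.
by have := lambda_le_bound eps; rewrite -/q; lra.
Qed.

Let rel_err_g_small x i j : ~ bad (q ^+ 2) x ->
  exists delta, `|delta| <= holder_stability_bound eps /\ g i x = (1 + delta) * g j x.
Proof.
move=> notbad; apply: rel_err_factor => //; first exact: holder_stability_bound_ge0.
apply: le_trans (sandwich_dist_le (A_ge0 x) lambda_q (sandwich_small i notbad)
  (sandwich_small j notbad)) _.
apply: ler_wpM2r => //; case/andP: lambda_q => lq0 _.
by have := lambda_le_bound eps; rewrite -/q; lra.
Qed.

Lemma holder_near_equality_small :
  almost_sharp eps -> holder_near_extremal (holder_stability_bound eps).
Proof.
move=> hyp; exists (bad (q ^+ 2)); split; first exact: bad_measurable.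
split; first by move=> i; exact: integral_bad_powR_small.
have fE i x : rho `^ P / r i `^ p i * `|f i x| `^ p i = rho `^ P * g i x.
  by rewrite gE mulrA.
have prodE x : `|\prod_j f j x| `^ P = rho `^ P * G x.
  by rewrite GE mulrA mulfV ?mul1r // gt_eqF // powR_gt0.
exists (fun i => rho `^ P / r i `^ p i).
split; first by move=> i; rewrite divr_gt0 ?powR_gt0.
split=> x notbad.
  move=> i; have [delta [delta_le giE]] := rel_err_G_small i notbad.
  by exists delta; split => //; rewrite fE prodE giE; ring.
move=> i j; have [delta [delta_le gijE]] := rel_err_g_small i j notbad.
by exists delta; split => //; rewrite !fE gijE; ring.
Qed.

End SmallDeficit.

Lemma holder_near_equality eps : 0 < eps -> almost_sharp eps ->
  holder_near_extremal (holder_stability_bound eps).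
Proof.
move=> eps_gt0 hyp; have [large|small] := ltrP (2^-1) (lambda * eps `^ 4^-1).
  exists setT; split; first exact: measurableT.
  split; last by exists (fun=> 1); split => //; split => x /(_ I).
  move=> i; rewrite LnormE poweR_EFin -EFinM integral_powR_normE lee_fin.
  by rewrite ler_peMl ?powR_ge0 //; have := lambda_le_bound eps; lra.
exact: holder_near_equality_small.
Qed.

End HolderNearEquality.

Theorem lemma5p1 (R : realType) (m : nat) (hm : (2 <= m)%N)
  (p : 'I_m -> R) (P : R) (hp : forall i, 0 < p i) (hP : 0 < P)
  (hsum : \sum_(i < m) (p i)^-1 = P^-1) :
  exists c : R -> R,
    (forall e, 0 <= e -> 0 <= c e) /\
    (c @ 0^'+ --> 0) /\
    forall (d : measure_display) (T : measurableType d)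
      (mu : {measure set T -> \bar R}) (f : 'I_m -> T -> R) (eps : R),
      (forall i, measurable_fun setT (f i)) ->
      (forall i, ('N[mu]_((p i)%:E)[EFin \o f i] < +oo)%E) ->
      (forall i, (0 < 'N[mu]_((p i)%:E)[EFin \o f i])%E) ->
      0 < eps ->
      ('N[mu]_(P%:E)[(fun x => (\prod_(i < m) f i x)%:E)] >=
         (1 - eps)%:E * \prod_(i < m) 'N[mu]_((p i)%:E)[EFin \o f i])%E ->
      exists E : set T, measurable E /\
        (forall i, (\int[mu]_(x in E) (`|f i x| `^ p i)%:E <=
                    (c eps)%:E * ('N[mu]_((p i)%:E)[EFin \o f i]) `^ (p i))%E) /\
        exists cs : 'I_m -> R, (forall i, 0 < cs i) /\
          (forall x, ~ E x -> forall i, exists delta : R,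
              `|delta| <= c eps /\
              cs i * `|f i x| `^ p i =
                (1 + delta) * `|\prod_(j < m) f j x| `^ P) /\
          (forall x, ~ E x -> forall i j, exists delta : R,
              `|delta| <= c eps /\
              cs i * `|f i x| `^ p i =
                (1 + delta) * (cs j * `|f j x| `^ p j)).
Proof.
exists (holder_stability_bound p P); split.
  by move=> e _; exact: holder_stability_bound_ge0 hm hp hP hsum e.
split; first exact: holder_stability_bound_cvg0.
by move=> d T mu f eps *; apply: holder_near_equality.
Qed.
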